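(* Let $n\ge1$ and let $d_1,\dots,d_n$ be positive real numbers. Let $\mathbf{d}_n=\operatorname{diag}(d_1,\dots,d_n)$, let $\mathbf{L}_n$ be the $n\times n$ lower triangular matrix all of whose entries on and below the diagonal equal $1$, and let $$\mathbf{M}(\mathbf{d}_n)=\mathbf{L}_n\mathbf{d}_n+\mathbf{d}_n\mathbf{L}_n^{\mathrm{T}}-\mathbf{d}_n.$$ Then the real symmetric matrix $\mathbf{M}(\mathbf{d}_n)$ is positive definite if and only if $d_1<d_2<\dots<d_n$. *)

From mathcomp Require Import all_boot all_order all_algebra.
Set Implicit Arguments. Unset Strict Implicit. Unset Printing Implicit Defensive.
Import Order.TTheory GRing.Theory Num.Theory.
Local Open Scope ring_scope.

Definition lower_ones (R : nzRingType) (n : nat) : 'M[R]_n :=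
  \matrix_(i < n, j < n) (if (j <= i)%N then 1 else 0).

Definition diagd (R : nzRingType) (n : nat) (d : 'I_n -> R) : 'M[R]_n :=
  diag_mx (\row_i d i).

Definition Mmat (R : nzRingType) (n : nat) (d : 'I_n -> R) : 'M[R]_n :=
  lower_ones R n *m diagd d + diagd d *m (lower_ones R n)^T - diagd d.

Definition posdef (R : numDomainType) (n : nat) (A : 'M[R]_n) : Prop :=
  A^T = A /\ forall x : 'cV[R]_n, x != 0 -> 0 < (x^T *m A *m x) 0 0.

From mathcomp Require Import all_boot all_order all_algebra.
Import Order.TTheory GRing.Theory Num.Theory.

Set Implicit Arguments.
Unset Strict Implicit.
Unset Printing Implicit Defensive.

Local Open Scope ring_scope.

(* Since M(d)_ij = d_min(i,j), we have M(d) = L diag(e) L^T where e_1 = d_1 and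
   e_k = d_k - d_(k-1) are the increments of d.  The matrix L is unimodular, so
   this congruence preserves positive definiteness in both directions: M(d) is
   positive definite iff every e_k is positive, i.e. iff 0 < d_1 < ... < d_n. *)

Section Congruence.
Variables (R : numFieldType) (n : nat).

Lemma posdef_congr_mx (P A : 'M[R]_n) :
  P \in unitmx -> posdef A -> posdef (P *m A *m P^T).
Proof.
move=> uP [symA posA]; split; first by rewrite !trmx_mul trmxK symA mulmxA.
move=> x x_neq0; have uPt : P^T \in unitmx by rewrite unitmx_tr.
have -> : x^T *m (P *m A *m P^T) *m x = (P^T *m x)^T *m A *m (P^T *m x).
  by rewrite trmx_mul trmxK !mulmxA.
apply: posA; apply: contra x_neq0 => /eqP Px0.
by rewrite -(mulKmx uPt x) Px0 mulmx0.
Qed.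

Lemma posdef_congr (P A : 'M[R]_n) :
  P \in unitmx -> posdef (P *m A *m P^T) <-> posdef A.
Proof.
move=> uP; split; last exact: posdef_congr_mx.
have uPinv : invmx P \in unitmx by rewrite unitmx_inv.
have uPt : P^T \in unitmx by rewrite unitmx_tr.
move/(posdef_congr_mx uPinv).
by rewrite trmx_inv !mulmxA (mulVmx uP) mul1mx (mulmxK uPt).
Qed.

End Congruence.

Lemma diagd_qformE (R : comNzRingType) (n : nat) (e : 'I_n -> R) (x : 'cV[R]_n) :
  (x^T *m diagd e *m x) 0 0 = \sum_i e i * x i 0 ^+ 2.
Proof.
rewrite /diagd mul_mx_diag mxE; apply: eq_bigr => i _.
by rewrite !mxE mulrAC -expr2 mulrC.
Qed.

Lemma posdef_diagd (R : realDomainType) (n : nat) (e : 'I_n -> R) :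
  posdef (diagd e) <-> forall i, 0 < e i.
Proof.
split=> [[_ pos_e] i | e_gt0].
  have := pos_e (delta_mx i 0); rewrite diagd_qformE (bigD1 i) //= big1.
    rewrite !mxE !eqxx expr1n mulr1 addr0; apply.
    by apply/eqP => /matrixP/(_ i 0)/eqP; rewrite !mxE !eqxx oner_eq0.
  by move=> j /negPf ji; rewrite !mxE ji expr0n mulr0.
split=> [|x x_neq0]; first by rewrite /diagd tr_diag_mx.
have [i xi_neq0] : exists i, x i 0 != 0.
  apply/existsP; apply: contraR x_neq0 => /existsPn x0.
  by apply/eqP/matrixP => i j; rewrite (ord1 j) mxE; apply/eqP/negbNE/x0.
rewrite diagd_qformE (bigD1 i) //=; apply: ltr_pwDl.
  by rewrite mulr_gt0 // lt_def sqr_ge0 sqrf_eq0 xi_neq0.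
by rewrite sumr_ge0 // => j _; rewrite mulr_ge0 ?sqr_ge0 // ltW.
Qed.

Lemma lower_ones_unitmx (R : comUnitRingType) (n : nat) :
  lower_ones R n \in unitmx.
Proof.
have trig_L : is_trig_mx (lower_ones R n).
  by apply/is_trig_mxP => i j lt_ij; rewrite mxE leqNgt lt_ij.
by rewrite unitmxE det_trig // big1 ?unitr1 // => i _; rewrite mxE leqnn.
Qed.

Lemma lower_ones_congr_diagdE (R : nzRingType) (n : nat) (e : 'I_n -> R) i j :
  (lower_ones R n *m diagd e *m (lower_ones R n)^T) i j =
  \sum_(m < n | (m <= i)%N && (m <= j)%N) e m.
Proof.
rewrite /diagd mul_mx_diag mxE [RHS]big_mkcond; apply: eq_bigr => m _.
by rewrite !mxE; case: (m <= i)%N; case: (m <= j)%N; rewrite ?mul1r ?mulr1 ?mul0r ?mulr0.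
Qed.

Section Increments.
Variables (R : nzRingType) (n : nat) (d : 'I_n.+1 -> R).

(* [dshift j] is d_{j-1}, with d_{-1} = 0. *)
Definition dshift (j : nat) : R := if j is k.+1 then d (inord k) else 0.

Definition increments (m : 'I_n.+1) : R := dshift m.+1 - dshift m.

Lemma sum_increments (k : 'I_n.+1) :
  \sum_(m < n.+1 | (m <= k)%N) increments m = d k.
Proof.
pose incr j := dshift j.+1 - dshift j.
rewrite -(big_ord_widen _ incr (ltn_ord k)) -(big_mkord xpredT incr).
by rewrite telescope_sumr //= inord_val subr0.
Qed.

Lemma Mmat_entry (i j : 'I_n.+1) :
  Mmat d i j = d (if (i <= j)%N then i else j).
Proof.
rewrite /Mmat /diagd /lower_ones mul_mx_diag mul_diag_mx !mxE.
case: ltngtP => [lt_ji | lt_ij | /val_inj ->].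
- by rewrite -val_eqE (gtn_eqF lt_ji) mul1r mulr0 addr0 subr0.
- by rewrite -val_eqE (ltn_eqF lt_ij) mul0r mulr1 add0r subr0.
- by rewrite eqxx mul1r mulr1 addrK.
Qed.

Lemma Mmat_factor :
  Mmat d = lower_ones R n.+1 *m diagd increments *m (lower_ones R n.+1)^T.
Proof.
apply/matrixP => i j; rewrite Mmat_entry lower_ones_congr_diagdE -sum_increments.
apply: eq_bigl => m; case: (leqP i j) => [le_ij | /ltnW le_ji].
  by apply/idP/andP => [le_mi | []//]; rewrite (leq_trans le_mi le_ij).
by apply/idP/andP => [le_mj | []//]; rewrite (leq_trans le_mj le_ji).
Qed.

End Increments.

Lemma increments_gt0 (R : numDomainType) (n : nat) (d : 'I_n.+1 -> R) :
  0 < d ord0 ->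
  (forall m, 0 < increments d m) <-> (forall i j : 'I_n.+1, (i < j)%N -> d i < d j).
Proof.
move=> d0_gt0; split=> [incr_gt0 i j lt_ij | d_incr [[|k] lt_kn]].
- pose D := [pred k | (k < n.+1)%N].
  have D_convex : {in D &, forall a b c, (a < c < b)%N -> c \in D}.
    by move=> a b _ lt_bn c /andP[_ lt_cb]; rewrite inE (ltn_trans lt_cb).
  have d_step : {in D, forall k, k.+1 \in D -> d (inord k) < d (inord k.+1)}.
    move=> k _ lt_k1n; have := incr_gt0 (inord k.+1).
    by rewrite /increments /= inordK // subr_gt0.
  rewrite -(inord_val i) -(inord_val j).
  exact: (homo_ltn_in lt_trans D_convex d_step (ltn_ord i) (ltn_ord j) lt_ij).
- by rewrite /increments /= subr0 (inord_val ord0).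
- by rewrite /increments /= subr_gt0 d_incr // !inordK // ltnW.
Qed.

Theorem lemma6 (R : realFieldType) (n : nat) (d : 'I_n.+1 -> R)
  (hd : forall i, 0 < d i) :
  posdef (Mmat d) <-> (forall i j : 'I_n.+1, (i < j)%N -> d i < d j).
Proof.
rewrite Mmat_factor; apply: iff_trans (posdef_congr _ (lower_ones_unitmx _ _)) _.
exact: iff_trans (posdef_diagd _) (increments_gt0 (hd ord0)).
Qed.
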